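(* Let $X$ be a complex Hilbert space, $T\in\mathbb Z^+$, and $\mathcal A$ a bounded linear operator on $X^T$. \begin{enumerate} \item The harmonic resolvent set $\rho_T(\mathcal A)$ is open and contains a neighbourhood of the origin; in particular it is nonempty. \item If $\mathcal A=\mathcal T_T(A)$ for some $T$-periodic sequence $(A_t)_{t\in\mathbb Z}$ of bounded linear operators on $X$, then $e^{2\pi j/T}\rho_T(\mathcal A)=\rho_T(\mathcal A)$. \end{enumerate}
   Context: $j$ denotes the imaginary unit. $\mathcal N_T:=\mathrm{diag}(\epsilon^kI_X)_{k=0}^{T-1}$ on $X^T$ with $\epsilon:=e^{2\pi j/T}$. The harmonic resolvent set is $\rho_T(\mathcal A):=\{z\in\mathbb C: \mathcal N_T-z\mathcal A \text{ has a bounded inverse}\}$. For a $T$-periodic sequence $A_t$ of bounded operators on $X$, its Fourier coefficients are $\widehat A_k:=\frac1T\sum_{t=0}^{T-1}A_te^{-2\pi jtk/T}$ (so $A_t=\sum_{k=0}^{T-1}\widehat A_ke^{2\pi jtk/T}$), and its Toeplitz transform $\mathcal T_T(A)$ is the $T\times T$ block operator matrix on $X^T$ whose entry in row $r$ and column $\ell$ ($0\le r,\ell<T$) is $\widehat A_{(r-\ell)\bmod T}$. *)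

From mathcomp Require Import all_boot all_algebra.
From mathcomp Require Import all_classical all_reals all_analysis.
From mathcomp Require Export complex.
Export GRing.Theory Num.Theory.
Export numFieldNormedType.Exports.

Set Implicit Arguments.
Unset Strict Implicit.
Unset Printing Implicit Defensive.

Local Open Scope ring_scope.
Local Open Scope complex_scope.

Definition C (R : realType) : numClosedFieldType := R[i].

Definition expi (R : realType) (theta : R) : C R := Complex (cos theta) (sin theta).

Definition epsT (R : realType) (T : nat) : C R := expi (2 * pi / T%:R).

(* X is a complex Hilbert space: a complete normed C-module whose norm
   comes from an inner product ip (linear in the first argument,
   conjugate symmetric, <x,x> = |x|^2). *)
Definition is_inner_product (R : realType) (X : normedModType (C R))
    (ip : X -> X -> C R) : Prop :=
  (forall (a : C R) (x y z : X), ip (a *: x + y) z = a * ip x z + ip y z) /\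
  (forall x y : X, ip x y = (ip y x)^*) /\
  (forall x : X, ip x x = `|x| ^+ 2).

Definition bounded_linear_X (R : realType) (X : normedModType (C R))
    (f : X -> X) : Prop :=
  (forall (a : C R) (x y : X), f (a *: x + y) = a *: f x + f y) /\
  (exists M : C R, forall x : X, `|f x| <= M * `|x|).

Definition vecT (R : realType) (X : normedModType (C R)) (T : nat) :=
  {ffun 'I_T -> X}.

Definition normT (R : realType) (X : normedModType (C R)) (T : nat)
    (v : vecT X T) : C R :=
  sqrtC (\sum_(i < T) `|v i| ^+ 2).

Definition bounded_linear_T (R : realType) (X : normedModType (C R)) (T : nat)
    (f : vecT X T -> vecT X T) : Prop :=
  (forall (a : C R) (u v : vecT X T), f (a *: u + v) = a *: f u + f v) /\
  (exists M : C R, forall v : vecT X T, normT (f v) <= M * normT v).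

Definition has_bounded_inverse (R : realType) (X : normedModType (C R)) (T : nat)
    (L : vecT X T -> vecT X T) : Prop :=
  exists Linv : vecT X T -> vecT X T,
    bounded_linear_T Linv /\
    (forall v, Linv (L v) = v) /\ (forall v, L (Linv v) = v).

Definition NT (R : realType) (X : normedModType (C R)) (T : nat)
    (v : vecT X T) : vecT X T :=
  [ffun k : 'I_T => epsT R T ^+ k *: v k].

Definition harm_resolvent (R : realType) (X : normedModType (C R)) (T : nat)
    (A : vecT X T -> vecT X T) : set (C R) :=
  [set z : C R | has_bounded_inverse (fun v => NT v - z *: A v)].

Definition fourier_coef (R : realType) (X : normedModType (C R)) (T : nat)
    (A : int -> X -> X) (k : nat) (x : X) : X :=
  (T%:R : C R)^-1 *:
    \sum_(t < T) expi (- (2 * pi * t%:R * k%:R / T%:R)) *: A (t%:Z) x.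

(* Toeplitz transform: entry (r, l) is hat A_{(r - l) mod T}. *)
Definition toeplitz (R : realType) (X : normedModType (C R)) (T : nat)
    (A : int -> X -> X) (v : vecT X T) : vecT X T :=
  [ffun r : 'I_T =>
     \sum_(l < T) fourier_coef T A ((r + (T - l)) %% T)%N (v l)].

Arguments toeplitz {R X} T A v.
Arguments harm_resolvent {R X T} A _.

(* N_T is invertible with an isometric inverse, so 0 lies in rho_T(A).  If L
   inverts N_T - z A, then N_T - w A = (N_T - z A) (I - (w - z) L A), and the
   second factor is inverted by a Neumann series as soon as
   |w - z| ||L|| ||A|| <= 1/2; the series converges coordinatewise because X is
   complete.  Hence rho_T(A) is open.
   For a Toeplitz transform, the cyclic shift (S v)_k = v_(k-1) commutes with
   T_T(A), whose entries depend only on (r - l) mod T, while N_T S = eps S N_T.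
   Thus N_T - eps z T_T(A) = (eps S) (N_T - z T_T(A)) S^-1, so eps rho_T(A) is
   contained in rho_T(A), and eps^T = 1 gives equality. *)

From HB Require Import structures.
(* Before Defs: fingroup has its own [normT], which must not shadow ours. *)
From mathcomp Require Import fingroup perm.
From Pilot Require Import Defs.
From mathcomp Require Import all_boot all_algebra.
From mathcomp Require Import all_classical all_reals all_analysis.
From mathcomp Require Import complex zify.
Import GRing.Theory Num.Theory.
Import order.Order.TTheory.
Import numFieldNormedType.Exports.
Local Open Scope ring_scope.
Local Open Scope classical_set_scope.

Section GeometricBounds.
Context {R : realType}.
Local Notation K := (C R).

Lemma ge0_complexRe {c : K} : 0 <= c -> c = (complex.Re c)%:C%C.
Proof. by case: c => a b; rewrite lecE /= => /andP[/eqP -> _]. Qed.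

Lemma exists_halfX_lt {c e : K} : 0 <= c -> 0 < e ->
  exists n : nat, 2^-1 ^+ n * c < e.
Proof.
move=> c0 e0; rewrite (ge0_complexRe c0) (ge0_complexRe (ltW e0)).
have := c0; rewrite lecE /= => /andP[_ c'0].
have := e0; rewrite ltcE /= => /andP[_ e'0].
set c' := complex.Re c in c'0 *; set e' := complex.Re e in e'0 *.
have c'1 : 0 < c' + 1 by rewrite ltr_wpDl.
have half_lt1 : `|2^-1 : R| < 1 by rewrite ger0_norm ?invf_lt1 ?ltr1n.
have [N _ HN] := cvgr_dist_lt _ _ (cvg_expr half_lt1) _ (divr_gt0 e'0 c'1).
exists N; have -> : 2^-1 ^+ N * c'%:C%C = (2^-1 ^+ N * c')%:C%C.
  by rewrite rmorphM rmorphXn fmorphV rmorph_nat.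
rewrite ltcR.
have := HN N (leqnn N); rewrite /= sub0r normrN ger0_norm ?exprn_ge0 // => hN.
rewrite (@le_lt_trans _ _ (2^-1 ^+ N * (c' + 1))) -?ltr_pdivlMr //.
by rewrite ler_wpM2l ?exprn_ge0 // lerDl.
Qed.

Context {X : normedModType K}.

Lemma cvg_halfX_bound (u : nat -> X) (a : X) (c : K) :
  (forall n, `|a - u n| <= 2^-1 ^+ n * c) -> u @ \oo --> a.
Proof.
move=> h; have c0 : 0 <= c by rewrite -[c]mul1r -(expr0 2^-1) (le_trans _ (h 0%N)).
apply/cvgrPdist_lt => e e0; have [N hN] := exists_halfX_lt c0 e0.
near=> n; apply: le_lt_trans (h n) (le_lt_trans _ hN).
rewrite ler_wpM2r // ler_wiXn2l ?invr_ge0 ?invf_le1 ?ler1n //.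
by near: n; exists N.
Unshelve. all: by end_near.
Qed.

End GeometricBounds.

Lemma dist_lim_halfX_cauchy (R : realType) (X : completeNormedModType (C R))
    (u : nat -> X) (c : C R) :
  (forall n m, (n <= m)%N -> `|u m - u n| <= 2^-1 ^+ n * c) ->
  forall n, `|lim (u @ \oo) - u n| <= 2^-1 ^+ n * c.
Proof.
move=> h; have c0 : 0 <= c.
  by rewrite -[c]mul1r -(expr0 2^-1) (le_trans _ (h 0%N 0%N _)).
have u_cvg : cvg (u @ \oo).
  apply/cauchy_cvgP/cauchyP => e e0; have [N hN] := exists_halfX_lt c0 e0.
  exists (u N); exists N => // m /= Nm.
  by rewrite -ball_normE /= distrC (le_lt_trans (h N m Nm)).
move=> n; apply/ler_addgt0Pr => e e0.
have [N _ HN] := cvgr_dist_lt _ _ u_cvg _ e0.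
apply: le_trans (ler_distD (u (maxn n N)) _ _) _.
by rewrite addrC lerD ?(ltW (HN _ (leq_maxr n N))) ?h ?leq_maxl.
Qed.

Definition linear_of {K : pzRingType} {U W : lmodType K} {f : U -> W}
    (f_lin : linear f) : {linear U -> W} :=
  HB.pack f (GRing.isLinear.Build K U W *:%R f f_lin).

Lemma iter_linear (K : pzRingType) (U : lmodType K) (f : {linear U -> U}) k :
  linear (iter k f).
Proof. by elim: k => [|k IHk] a u v //=; rewrite IHk linearP. Qed.

Lemma ffunBE (aT : finType) (U : zmodType) (f g : {ffun aT -> U}) a :
  (f - g) a = f a - g a.
Proof. by rewrite !ffunE. Qed.

Section NormT.
Context {R : realType} {X : normedModType (C R)} {T : nat}.
Local Notation K := (C R).
Local Notation V := (vecT X T).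
Implicit Types (u v : V) (f g : V -> V) (c : 'I_T -> K) (s : {perm 'I_T}).

Lemma normT_ge0 v : 0 <= normT v.
Proof. by rewrite sqrtC_ge0 sumr_ge0 // => i _; rewrite exprn_ge0. Qed.

Lemma ler_coord_normT v i : `|v i| <= normT v.
Proof.
rewrite /normT -(sqrCK (normr_ge0 (v i))) ler_sqrtC ?nnegrE ?exprn_ge0 //;
  last by rewrite sumr_ge0 // => j _; rewrite exprn_ge0.
by rewrite (bigD1 i) //= lerDl sumr_ge0 // => j _; rewrite exprn_ge0.
Qed.

Lemma normT_le_bound v (b : K) : 0 <= b -> (forall i, `|v i| <= b) ->
  normT v <= T%:R * b.
Proof.
move=> b0 vb; have Tb0 : 0 <= T%:R * b by rewrite mulr_ge0 ?ler0n.
rewrite /normT -(sqrCK Tb0) ler_sqrtC ?nnegrE ?exprn_ge0 //;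
  last by rewrite sumr_ge0 // => j _; rewrite exprn_ge0.
apply: (@le_trans _ _ (\sum_(i < T) b ^+ 2)).
  by apply: ler_sum => i _; rewrite lerXn2r ?nnegrE.
rewrite sumr_const card_ord exprMn -[b ^+ 2 *+ T]mulr_natl ler_wpM2r ?exprn_ge0 //.
by rewrite -natrX ler_nat; case: T => // n; rewrite -mulnn leq_pmull.
Qed.

Lemma normTZ (a : K) v : normT (a *: v) = `|a| * normT v.
Proof.
rewrite /normT; under eq_bigr => i _ do rewrite ffunE normrZ exprMn.
rewrite -mulr_sumr sqrtCM ?nnegrE ?exprn_ge0 ?sqrCK //.
by rewrite sumr_ge0 // => j _; rewrite exprn_ge0.
Qed.

Lemma bounded_linear_T_ge0 {f} : bounded_linear_T f ->
  exists2 M : K, 0 <= M & forall v, normT (f v) <= M * normT v.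
Proof.
case=> _ [M fM]; exists `|M| => // v.
have fM0 : 0 <= M * normT v := le_trans (normT_ge0 _) (fM v).
by rewrite -(ger0_norm (normT_ge0 v)) -normrM ger0_norm.
Qed.

Lemma bounded_linear_T_comp {f g} :
  bounded_linear_T f -> bounded_linear_T g -> bounded_linear_T (f \o g).
Proof.
move=> bf bg; have [Mf Mf0 fM] := bounded_linear_T_ge0 bf.
have [Mg _ gM] := bounded_linear_T_ge0 bg.
split; first by move=> a u v /=; rewrite bg.1 bf.1.
by exists (Mf * Mg) => v; rewrite -mulrA (le_trans (fM _)) ?ler_wpM2l.
Qed.

Lemma has_bounded_inverse_comp {f g} :
  has_bounded_inverse f -> has_bounded_inverse g -> has_bounded_inverse (f \o g).
Proof.
move=> [fi [bfi [fiK fKi]]] [gi [bgi [giK gKi]]].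
exists (gi \o fi); split; first exact: bounded_linear_T_comp.
by split=> v /=; rewrite ?fiK ?giK ?gKi ?fKi.
Qed.

Lemma eq_has_bounded_inverse {f g} :
  has_bounded_inverse f -> f =1 g -> has_bounded_inverse g.
Proof. by move=> + /funext fg; rewrite fg. Qed.

Definition wshift (c : 'I_T -> K) (s : {perm 'I_T}) v : V :=
  [ffun k => c k *: v (s k)].

Lemma normT_wshift c s v : (forall k, `|c k| = 1) ->
  normT (wshift c s v) = normT v.
Proof.
move=> c_unit; rewrite /normT; congr sqrtC.
rewrite [RHS](reindex_inj (@perm_inj _ s)).
by apply: eq_bigr => i _; rewrite ffunE normrZ c_unit mul1r.
Qed.

Lemma wshift_bounded_linear c s : (forall k, `|c k| = 1) ->
  bounded_linear_T (wshift c s).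
Proof.
move=> c_unit; split; last by exists 1 => v; rewrite normT_wshift ?mul1r.
by move=> a u v; apply/ffunP => k; rewrite !ffunE scalerDr !scalerA mulrC.
Qed.

Lemma wshift_has_bounded_inverse c s : (forall k, `|c k| = 1) ->
  has_bounded_inverse (wshift c s).
Proof.
move=> c_unit; have c_neq0 k : c k != 0 by rewrite -normr_eq0 c_unit oner_neq0.
exists (wshift (fun k => (c ((s^-1)%g k))^-1) (s^-1)%g); split.
  by apply: wshift_bounded_linear => k; rewrite normfV c_unit invr1.
by split=> v; apply/ffunP => k; rewrite !ffunE scalerA
  ?permK ?permKV ?mulVf ?mulfV ?scale1r.
Qed.

End NormT.

Section NeumannSeries.
Context {R : realType} {X : completeNormedModType (C R)} {T : nat}.
Local Notation K := (C R).
Local Notation V := (vecT X T).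
Local Notation q := (2^-1 : K).
Variable B : {linear V -> V}.
Hypothesis B_half : forall v, normT (B v) <= q * normT v.

Lemma normT_iter k v : normT (iter k B v) <= q ^+ k * normT v.
Proof.
elim: k => [|k IHk] /=; first by rewrite mul1r.
by rewrite exprS -mulrA (le_trans (B_half _)) // ler_wpM2l ?invr_ge0.
Qed.

Lemma iter_subB k v : iter k B (v - B v) = iter k B v - iter k.+1 B v.
Proof. by elim: k => [|k IHk] //=; rewrite IHk raddfB. Qed.

Lemma sum_halfX_le n m : (n <= m)%N -> \sum_(n <= k < m) q ^+ k <= 2 * q ^+ n.
Proof.
have geo d : \sum_(n <= k < n + d) q ^+ k + 2 * q ^+ (n + d) = 2 * q ^+ n.
  elim: d => [|d IHd]; first by rewrite addn0 big_geq // add0r.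
  rewrite addnS big_nat_recr ?leq_addr //= -addrA -IHd; congr (_ + _).
  by rewrite exprS mulrA mulfV ?pnatr_eq0 // mul1r mulr_natl mulr2n.
move/subnKC <-; rewrite -(geo (m - n)%N) lerDl.
by rewrite mulr_ge0 ?exprn_ge0 ?invr_ge0.
Qed.

Definition neumann_sum n v : V := \sum_(0 <= k < n) iter k B v.

Definition neumann_inv v : V :=
  [ffun i => lim ((fun n => neumann_sum n v i) @ \oo)].

Lemma neumann_sumP n : linear (neumann_sum n).
Proof.
move=> a u v; rewrite /neumann_sum scaler_sumr -big_split /=.
by apply: eq_bigr => k _; rewrite iter_linear.
Qed.

Lemma subB_neumann_sum n v :
  neumann_sum n v - B (neumann_sum n v) = v - iter n B v.
Proof.
rewrite /neumann_sum linear_sum -sumrB.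
rewrite (telescope_sumr_eq (fun k => - iter k B v)) //.
  by rewrite opprK addrC.
by move=> k _; rewrite opprK addrC.
Qed.

Lemma neumann_sum_subB n v : neumann_sum n (v - B v) = v - iter n B v.
Proof.
rewrite /neumann_sum (telescope_sumr_eq (fun k => - iter k B v)) //.
  by rewrite opprK addrC.
by move=> k _ /=; rewrite iter_subB opprK addrC.
Qed.

Lemma neumann_sum_cauchy v i n m : (n <= m)%N ->
  `|neumann_sum m v i - neumann_sum n v i| <= q ^+ n * (2 * normT v).
Proof.
move=> nm; rewrite /neumann_sum (big_cat_nat (leq0n n) nm) /= ffunE.
rewrite addrAC subrr add0r sum_ffunE (le_trans (ler_norm_sum _ _ _)) //.
apply: (@le_trans _ _ (\sum_(n <= k < m) q ^+ k * normT v)).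
  by apply: ler_sum => k _; rewrite (le_trans (ler_coord_normT _ i)) ?normT_iter.
by rewrite -mulr_suml mulrA [q ^+ n * 2]mulrC ler_wpM2r ?normT_ge0 ?sum_halfX_le.
Qed.

Lemma dist_neumann_inv_sum v i n :
  `|neumann_inv v i - neumann_sum n v i| <= q ^+ n * (2 * normT v).
Proof.
by rewrite ffunE; apply: dist_lim_halfX_cauchy => k m; apply: neumann_sum_cauchy.
Qed.

Lemma neumann_sum_cvg v i :
  (fun n => neumann_sum n v i) @ \oo --> neumann_inv v i.
Proof. exact: cvg_halfX_bound (dist_neumann_inv_sum v i). Qed.

Lemma iter_cvg0 v i : (fun n => iter n B v i) @ \oo --> 0.
Proof.
apply: (cvg_halfX_bound _ _ (normT v)) => n.
by rewrite sub0r normrN (le_trans (ler_coord_normT _ i)) ?normT_iter.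
Qed.

Lemma B_neumann_sum_cvg v i :
  (fun n => B (neumann_sum n v) i) @ \oo --> B (neumann_inv v) i.
Proof.
apply: (cvg_halfX_bound _ _ (T%:R * (2 * normT v))) => n.
set d := neumann_inv v - neumann_sum n v.
have -> : B (neumann_inv v) i - B (neumann_sum n v) i = B d i.
  by rewrite /d raddfB ffunBE.
rewrite (le_trans (ler_coord_normT _ i)) // (le_trans (B_half _)) //.
rewrite (@le_trans _ _ (normT d)) ?ler_piMl ?normT_ge0 ?invf_le1 ?ler1n //.
rewrite mulrCA normT_le_bound ?mulr_ge0 ?exprn_ge0 ?invr_ge0 ?normT_ge0 //.
by move=> j; rewrite ffunBE dist_neumann_inv_sum.
Qed.

Lemma neumann_invP : linear neumann_inv.
Proof.
move=> a u v; apply/ffunP => i.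
have -> : (a *: neumann_inv u + neumann_inv v) i =
          a *: neumann_inv u i + neumann_inv v i by rewrite !ffunE.
rewrite ffunE; apply: (cvg_lim (@norm_hausdorff _ X)).
have -> : (fun n => neumann_sum n (a *: u + v) i) =
          (fun n => a *: neumann_sum n u i + neumann_sum n v i).
  by apply/funext => n; rewrite neumann_sumP !ffunE.
apply: cvgD; last exact: neumann_sum_cvg.
by apply: cvgZ; [exact: cvg_cst | exact: neumann_sum_cvg].
Qed.

Lemma neumann_inv_bounded v : normT (neumann_inv v) <= T%:R * 2 * normT v.
Proof.
rewrite -mulrA normT_le_bound ?mulr_ge0 ?normT_ge0 // => i.
have := dist_neumann_inv_sum v i 0; rewrite /neumann_sum big_geq // expr0 mul1r.
by rewrite !ffunE subr0.
Qed.

Lemma neumann_invK v : neumann_inv (v - B v) = v.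
Proof.
apply/ffunP => i; rewrite ffunE; apply: (cvg_lim (@norm_hausdorff _ X)).
have -> : (fun n => neumann_sum n (v - B v) i) = (fun n => v i - iter n B v i).
  by apply/funext => n; rewrite neumann_sum_subB ffunBE.
by rewrite -[X in _ --> X]subr0; exact: cvgB (cvg_cst _) (iter_cvg0 v i).
Qed.

Lemma neumann_invVK v : neumann_inv v - B (neumann_inv v) = v.
Proof.
apply/ffunP => i; rewrite ffunBE.
have seqE : (fun n => neumann_sum n v i - B (neumann_sum n v) i) =
            (fun n => v i - iter n B v i).
  apply/funext => n.
  by have := congr1 (fun w : V => w i) (subB_neumann_sum n v); rewrite !ffunBE.
have lhs : (fun n => v i - iter n B v i) @ \oo -->
           neumann_inv v i - B (neumann_inv v) i.
  by rewrite -seqE; apply: cvgB; [exact: neumann_sum_cvg | exact: B_neumann_sum_cvg].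
have rhs : (fun n => v i - iter n B v i) @ \oo --> v i.
  by rewrite -[X in _ --> X]subr0; apply: cvgB; [exact: cvg_cst | exact: iter_cvg0].
exact: cvg_unique (@norm_hausdorff _ X) _ _ _ _ lhs rhs.
Qed.

Lemma neumann_has_bounded_inverse : has_bounded_inverse (fun v => v - B v).
Proof.
exists neumann_inv; split; last by split; [exact: neumann_invK | exact: neumann_invVK].
by split; [exact: neumann_invP | exists (T%:R * 2); exact: neumann_inv_bounded].
Qed.

End NeumannSeries.

Section UnitRoot.
Context {R : realType}.

Lemma norm_expi (t : R) : `|expi t| = 1.
Proof.
suff : forall y : R[i], complex.Re y = cos t -> complex.Im y = sin t -> `|y| = 1.
  by apply.
by move=> y Rey Imy; rewrite normc_def Rey Imy cos2Dsin2 sqrtr1.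
Qed.

Lemma expiD (a b : R) : expi a * expi b = expi (a + b).
Proof.
rewrite /expi cosD sinD.
suff : forall x y : R[i], x = Complex (cos a) (sin a) -> y = Complex (cos b) (sin b) ->
    x * y = Complex (cos a * cos b - sin a * sin b) (sin a * cos b + cos a * sin b).
  by move/(_ _ _ erefl erefl).
by move=> x y -> ->; simpc; rewrite [sin a * _ + _]addrC.
Qed.

Lemma expiMn (a : R) n : expi a ^+ n = expi (a *+ n).
Proof.
elim: n => [|n IHn]; first by rewrite /expi cos0 sin0.
by rewrite exprS IHn expiD mulrS.
Qed.

Lemma epsT_expT {T : nat} : (0 < T)%N -> epsT R T ^+ T = 1.
Proof.
move=> T_gt0; rewrite /epsT expiMn -(mulr_natr (2 * pi / T%:R)).
by rewrite divfK ?pnatr_eq0 -?lt0n // mulr_natl /expi cos2pi sin2pi.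
Qed.

Lemma norm_epsTX (T k : nat) : `|epsT R T ^+ k| = 1.
Proof. by rewrite normrX norm_expi expr1n. Qed.

End UnitRoot.

Section HarmonicResolvent.
Context {R : realType} {X : completeNormedModType (C R)} {T : nat}.
Local Notation K := (C R).
Local Notation V := (vecT X T).
Local Notation eps := (epsT R T).

Definition harm_pencil (A : V -> V) (z : K) v : V := NT v - z *: A v.

Lemma NTP : linear (@NT R X T).
Proof. by move=> a u v; apply/ffunP => k; rewrite !ffunE scalerDr !scalerA mulrC. Qed.

Lemma harm_pencilP (A : {linear V -> V}) z : linear (harm_pencil A z).
Proof.
move=> a u v; rewrite /harm_pencil NTP linearP scalerDr scalerA mulrC -scalerA.
by rewrite scalerBr opprD addrACA.
Qed.

HB.instance Definition _ (A : {linear V -> V}) z :=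
  GRing.isLinear.Build K V V *:%R (harm_pencil A z) (harm_pencilP A z).

Lemma harm_resolvent0 (A : V -> V) : harm_resolvent A 0.
Proof.
have NT_inv := @wshift_has_bounded_inverse R X T (fun k => eps ^+ k) 1%g
  (norm_epsTX T).
apply: (eq_has_bounded_inverse NT_inv) => v.
by apply/ffunP => k; rewrite scale0r subr0 !ffunE perm1.
Qed.

Lemma harm_pencil_perturb (A : {linear V -> V}) (z w : K) (L : V -> V) :
    (forall v, harm_pencil A z (L v) = v) ->
  forall v, harm_pencil A z (v - (w - z) *: L (A v)) = harm_pencil A w v.
Proof.
move=> LK v; rewrite raddfB /= linearZ /= LK.
by rewrite /harm_pencil scalerBl opprB addrA subrK.
Qed.

Lemma harm_resolvent_nbhs (A : V -> V) (z : K) :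
  bounded_linear_T A -> harm_resolvent A z -> nbhs z (harm_resolvent A).
Proof.
move=> A_bd hz; have [L [L_bd [_ LK]]] := hz.
have [MA MA0 AM] := bounded_linear_T_ge0 A_bd.
have [ML ML0 LM] := bounded_linear_T_ge0 L_bd.
have M_gt0 : 0 < ML * MA + 1 by rewrite ltr_wpDl ?mulr_ge0.
apply/nbhs_ballP; exists (2^-1 / (ML * MA + 1)); first by rewrite /= divr_gt0 ?invr_gt0.
move=> w; rewrite -ball_normE /= => zw.
have B_lin : linear (fun v => (w - z) *: L (A v)).
  by move=> a u v; rewrite A_bd.1 L_bd.1 scalerDr !scalerA mulrC.
have B_half v : normT (linear_of B_lin v) <= 2^-1 * normT v.
  rewrite /= normTZ (@le_trans _ _ (`|w - z| * (ML * (MA * normT v)))) //.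
    by rewrite ler_wpM2l // (le_trans (LM _)) // ler_wpM2l.
  rewrite !mulrA ler_wpM2r ?normT_ge0 //.
  apply: (@le_trans _ _ (2^-1 / (ML * MA + 1) * (ML * MA))).
    by rewrite -mulrA ler_wpM2r ?mulr_ge0 // distrC (ltW zw).
  rewrite -mulrA ler_piMr ?invr_ge0 // mulrC ler_pdivrMr //.
  by rewrite mul1r lerDl.
have := has_bounded_inverse_comp hz (neumann_has_bounded_inverse _ B_half).
move/eq_has_bounded_inverse; apply.
exact: (harm_pencil_perturb (linear_of A_bd.1)).
Qed.

Lemma open_harm_resolvent (A : V -> V) :
  bounded_linear_T A -> open (harm_resolvent A).
Proof. by move=> A_bd; rewrite openE => z; exact: harm_resolvent_nbhs. Qed.

End HarmonicResolvent.

(* As naturals, [ordS l] is [(l + 1) %% T] and [ord_pred r] is [(r + T - 1) %% T]. *)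
Lemma toeplitz_index_rot (T : nat) (r l : 'I_T) :
  ((r + (T - ordS l)) %% T = (ord_pred r + (T - l)) %% T)%N.
Proof.
case: r l => [r rT] [l lT] /=; rewrite modnDml.
have [lT'|Tl|lT'] := ltngtP l.+1 T.
- have -> : ((r + T).-1 + (T - l) = r + (T - l.+1) + T)%N by lia.
  by rewrite (modn_small lT') modnDr.
- by lia.
- by rewrite lT' modnn subn0; congr modn; lia.
Qed.

Section Rotation.
Context {R : realType} {X : completeNormedModType (C R)} {T : nat}.
Hypothesis T_gt0 : (0 < T)%N.
Local Notation V := (vecT X T).
Local Notation eps := (epsT R T).

Definition cshift (v : V) : V := [ffun k => v (ord_pred k)].

Lemma toeplitz_cshift (A : int -> X -> X) u :
  toeplitz T A (cshift u) = cshift (toeplitz T A u).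
Proof.
apply/ffunP => r; rewrite !ffunE (reindex_inj (@ordS_inj T)) /=.
by apply: eq_bigr => l _; rewrite ffunE ordSK toeplitz_index_rot.
Qed.

Lemma NT_cshift u : NT (cshift u) = eps *: cshift (NT u).
Proof.
have epsE m : eps ^+ (m %% T) = eps ^+ m := expr_mod m (epsT_expT T_gt0).
apply/ffunP => k; rewrite !ffunE scalerA; congr (_ *: _).
rewrite -exprS -[RHS]epsE /= -addn1 modnDml addn1.
by rewrite prednK ?addn_gt0 ?T_gt0 ?orbT // modnDr epsE.
Qed.

Lemma harm_pencil_cshift (A : int -> X -> X) z u :
  harm_pencil (toeplitz T A) (eps * z) (cshift u) =
  eps *: cshift (harm_pencil (toeplitz T A) z u).
Proof.
rewrite /harm_pencil toeplitz_cshift NT_cshift.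
by apply/ffunP => k; rewrite !ffunE scalerBr -scalerA.
Qed.

Lemma harm_resolvent_rot (A : int -> X -> X) z :
  harm_resolvent (toeplitz T A) z -> harm_resolvent (toeplitz T A) (eps * z).
Proof.
move=> hz; pose s : {perm 'I_T} := perm (@ord_pred_inj T).
have sE k : s k = ord_pred k by rewrite permE.
have eps_s := @wshift_has_bounded_inverse R X T (fun=> eps) s (fun=> norm_epsTX T 1).
have unshift := @wshift_has_bounded_inverse R X T (fun=> 1) (s^-1)%g (fun=> normr1 _).
have := has_bounded_inverse_comp eps_s (has_bounded_inverse_comp hz unshift).
move/eq_has_bounded_inverse; apply=> v /=.
have vE : v = cshift (wshift (fun=> 1) (s^-1)%g v).
  by apply/ffunP => k; rewrite !ffunE -sE permK scale1r.
rewrite [in RHS]vE -[RHS]/(harm_pencil _ _ _) harm_pencil_cshift.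
by apply/ffunP => k; rewrite !ffunE sE.
Qed.

Lemma harm_resolvent_rotX (A : int -> X -> X) z n :
  harm_resolvent (toeplitz T A) z -> harm_resolvent (toeplitz T A) (eps ^+ n * z).
Proof.
move=> hz; elim: n => [|n IHn]; first by rewrite mul1r.
by rewrite exprS -mulrA; exact: harm_resolvent_rot.
Qed.

End Rotation.

Theorem proposition6 (R : realType) (X : completeNormedModType (C R))
    (ip : X -> X -> C R) (hip : is_inner_product ip)
    (T : nat) (hT : (0 < T)%N) :
  (forall A : vecT X T -> vecT X T, bounded_linear_T A ->
     [/\ open (harm_resolvent A),
         nbhs (0 : C R) (harm_resolvent A) &
         harm_resolvent A !=set0]) /\
  (forall A : int -> X -> X,
     (forall t, bounded_linear_X (A t)) ->
     (forall t, A (t + T%:Z)%R = A t) ->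
     (fun z : C R => epsT R T * z) @` harm_resolvent (toeplitz T A)
       = harm_resolvent (toeplitz T A)).
Proof.
split=> [A A_bd | A _ _].
  have rho0 := harm_resolvent0 A.
  split; [exact: open_harm_resolvent | exact: harm_resolvent_nbhs | by exists 0].
apply/seteqP; split=> [_ [z hz <-] | w hw]; first exact: harm_resolvent_rot.
exists (epsT R T ^+ T.-1 * w); first exact: harm_resolvent_rotX.
by rewrite mulrA -exprS prednK // epsT_expT // mul1r.
Qed.
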